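(* Let $G$ be a finite group. Then $G$ is an elementary abelian $2$-group if and only if the set of maximal sum-free sets in $G$ coincides with the set $\{G\setminus M : M \text{ a maximal subgroup of } G\}$ of complements of the maximal subgroups of $G$, and $\Phi(G)=1$, where $\Phi(G)$ is the Frattini subgroup of $G$ (the intersection of all maximal subgroups of $G$).
   Context: A non-empty subset $S$ of a group $G$ is called sum-free if for all $s_1,s_2\in S$ (including the case $s_1=s_2$) one has $s_1s_2\notin S$. A maximal sum-free set in a finite group $G$ means a sum-free set of largest possible cardinality among all sum-free sets in $G$ (maximal by cardinality). *)

From HB Require Import structures.
From mathcomp Require Import all_boot all_fingroup all_solvable.
Set Implicit Arguments. Unset Strict Implicit. Unset Printing Implicit Defensive.
Local Open Scope group_scope.

Definition sum_free (gT : finGroupType) (G S : {set gT}) : bool :=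
  [&& S != set0, S \subset G &
      [forall s1 in S, forall s2 in S, s1 * s2 \notin S]].

(* maximal sum-free set = sum-free set of largest cardinality *)
Definition max_sum_free (gT : finGroupType) (G S : {set gT}) : bool :=
  sum_free G S && [forall T : {set gT}, sum_free G T ==> (#|T| <= #|S|)].

From mathcomp Require Import all_boot all_fingroup all_solvable.
From mathcomp Require Import zify.
Local Open Scope group_scope.
Set Implicit Arguments.
Unset Strict Implicit.
Unset Printing Implicit Defensive.

(* If S is sum-free and s \in S then s *: S misses S, so 2 |S| <= |G|.  When
   equality holds, x |-> s * x exchanges S and G :\: S, which forces G :\: S
   to be a subgroup of index 2; conversely the complement of a subgroup of
   index 2 is sum-free.  In a 2-group the maximal subgroups are exactly those
   of index 2, and Phi(G) = 1 when G is elementary abelian.  Conversely, if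
   every G :\: M is sum-free then x ^+ 2 lies in every maximal M, hence in
   Phi(G) = 1, so G has exponent 2. *)

Section SumFree.

Variables (gT : finGroupType) (G : {group gT}).
Implicit Types (S : {set gT}) (M : {group gT}).

Lemma sum_freeP S :
  reflect [/\ S != set0, S \subset G & {in S &, forall a b, a * b \notin S}]
          (sum_free G S).
Proof.
apply: (iffP and3P) => [[nzS sSG /forall_inP sfS] | [nzS sSG sfS]].
  by split=> // a b aS; apply/(forall_inP (sfS a aS)).
by split=> //; apply/forall_inP => a aS; apply/forall_inP => b bS; apply: sfS.
Qed.

Lemma sum_free_nontrivial S : sum_free G S -> G :!=: 1.
Proof.
case/sum_freeP => /set0Pn[s sS] sSG sfS; apply/trivgPn; exists s.
  exact: (subsetP sSG).
by apply: contraNneq (sfS s s sS sS) => s1; rewrite {1}s1 mul1g.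
Qed.

Lemma sum_free_lcoset_sub S s : sum_free G S -> s \in S -> s *: S \subset G :\: S.
Proof.
case/sum_freeP => _ sSG sfS sS; apply/subsetP => _ /lcosetP[a aS ->].
by rewrite inE sfS // groupM ?(subsetP sSG).
Qed.

Lemma sum_free_card S : sum_free G S -> (2 * #|S| <= #|G|)%N.
Proof.
move=> sfS; have /sum_freeP[/set0Pn[s sS] sSG _] := sfS.
have := subset_leq_card (sum_free_lcoset_sub sfS sS).
by rewrite card_lcoset cardsDS // leq_subRL ?subset_leq_card // mul2n -addnn.
Qed.

Section HalfSize.

Variable S : {set gT}.
Hypotheses (sfS : sum_free G S) (halfS : (2 * #|S|)%N = #|G|).

Lemma sum_free_half_lcoset s : s \in S -> s *: S = G :\: S.
Proof.
move=> sS; apply/eqP; rewrite eqEcard sum_free_lcoset_sub //= card_lcoset.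
have /sum_freeP[_ sSG _] := sfS.
by rewrite cardsDS // -halfS mul2n -addnn addnK.
Qed.

(* x |-> s * x permutes G and maps S onto G :\: S, hence G :\: S onto S. *)
Lemma sum_free_half_mulg s x : s \in S -> x \in G -> (s * x \in S) = (x \notin S).
Proof.
move=> sS xG; have /sum_freeP[_ sSG sfS'] := sfS.
apply/idP/idP => [sxS | xS']; first by apply: contraL sxS => xS; apply: sfS'.
apply: contraR xS' => sxS'; have : s * x \in G :\: S.
  by rewrite inE sxS' groupM // (subsetP sSG).
by rewrite -(sum_free_half_lcoset sS) mem_lcoset mulKg.
Qed.

Lemma sum_free_half_group_set : group_set (G :\: S).
Proof.
have /sum_freeP[/set0Pn[s sS] _ _] := sfS.
apply/group_setP; split=> [|x y].
  by rewrite inE group1 andbT -(sum_free_half_mulg sS) ?mulg1.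
rewrite !inE => /andP[xS' xG] /andP[yS' yG]; rewrite groupM // andbT.
have sxS : s * x \in S by rewrite sum_free_half_mulg.
have sxyS : s * x * y \in S by rewrite sum_free_half_mulg.
by rewrite -(sum_free_half_mulg sS) ?groupM // mulgA.
Qed.

Lemma sum_free_half_compl :
  exists M : {group gT}, [/\ M \subset G, #|G : M| = 2 & S = G :\: M].
Proof.
have /sum_freeP[_ sSG _] := sfS.
pose M := Group sum_free_half_group_set.
have sMG : M \subset G := subsetDl G S.
have cardM : #|M| = #|S|.
  by rewrite /M /= cardsDS // -halfS mul2n -addnn addnK.
exists M; split=> //; last by rewrite /= setDDr setDv set0U; apply/esym/setIidPr.
by have := Lagrange sMG; have := cardG_gt0 M; rewrite cardM; nia.
Qed.

End HalfSize.

Lemma index2_compl_card M : M \subset G -> #|G : M| = 2 -> (2 * #|G :\: M|)%N = #|G|.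
Proof.
by move=> sMG iM; have := Lagrange sMG; rewrite iM cardsDS //; lia.
Qed.

Lemma index2_mulg_compl M x y :
  M \subset G -> #|G : M| = 2 -> x \in G :\: M -> y \in G :\: M -> x * y \in M.
Proof.
move=> sMG iM; rewrite !inE => /andP[xM' xG] /andP[yM' yG].
have compl_rcoset : M :* y = G :\: M.
  apply/eqP; rewrite eqEcard card_rcoset.
  rewrite -(leq_pmul2l (isT : 0 < 2)%N) index2_compl_card // -(Lagrange sMG) iM.
  rewrite mulnC leqnn andbT; apply/subsetP => _ /rcosetP[m mM ->].
  by rewrite inE groupMl // yM' groupM // (subsetP sMG).
apply: contraR xM' => xyM'; have : x * y \in G :\: M by rewrite inE xyM' groupM.
by rewrite -compl_rcoset mem_rcoset mulgK.
Qed.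

Lemma index2_compl_sum_free M : M \subset G -> #|G : M| = 2 -> sum_free G (G :\: M).
Proof.
move=> sMG iM; apply/sum_freeP; split; last 1 first.
- by move=> x y xD yD; rewrite inE negb_and negbK index2_mulg_compl.
- by rewrite -card_gt0 -(ltn_pmul2l (isT : 0 < 2)%N) index2_compl_card // muln0.
- exact: subsetDl.
Qed.

(* Once G has a subgroup of index 2, the largest sum-free sets have size |G|/2. *)
Lemma max_sum_free_index2 M0 S :
    M0 \subset G -> #|G : M0| = 2 ->
  max_sum_free G S <->
  exists M : {group gT}, [/\ M \subset G, #|G : M| = 2 & S = G :\: M].
Proof.
move=> sM0G iM0; have halfM0 := index2_compl_card sM0G iM0.
split=> [/andP[sfS /forallP maxS] | [M [sMG iM ->]]].
  apply: sum_free_half_compl => //; apply/eqP; rewrite eqn_leq sum_free_card //.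
  by rewrite -halfM0 leq_mul2l (implyP (maxS _)) ?index2_compl_sum_free.
apply/andP; split; first exact: index2_compl_sum_free.
apply/forallP => T; apply/implyP => /sum_free_card.
by rewrite -(index2_compl_card sMG iM) leq_mul2l.
Qed.

Lemma pgroup_maximalE p M :
  prime p -> p.-group G -> maximal M G = (M \subset G) && (#|G : M| == p).
Proof.
move=> p_pr pG; apply/idP/andP => [maxM | [sMG /eqP iM]].
  by rewrite (p_maximal_index pG maxM) (proper_sub (maxgroupp maxM)).
by apply: p_index_maximal; rewrite ?iM.
Qed.

Lemma max_sum_free_2group S :
    2.-group G ->
  max_sum_free G S <-> exists M : {group gT}, maximal M G /\ S = G :\: M.
Proof.
move=> pG; split=> [maxS | [M [maxM ->]]].
  have /andP[/sum_free_nontrivial ntG _] := maxS.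
  have [G1 | [M0 maxM0 _]] := maximal_exists (sub1G G).
    by rewrite -G1 eqxx in ntG.
  move: maxM0; rewrite (pgroup_maximalE _ _ pG) // => /andP[sM0G /eqP iM0].
  have [M [sMG iM ->]] := (max_sum_free_index2 _ sM0G iM0).1 maxS.
  by exists M; rewrite (pgroup_maximalE _ _ pG) // sMG iM.
move: maxM; rewrite (pgroup_maximalE _ _ pG) // => /andP[sMG /eqP iM].
by apply/(max_sum_free_index2 _ sMG iM); exists M.
Qed.

Lemma expg2_Phi x :
    (forall M : {group gT}, maximal M G -> sum_free G (G :\: M)) ->
  x \in G -> x ^+ 2 \in 'Phi(G).
Proof.
move=> sfM xG; apply/bigcapP => M /predU1P[-> | maxM]; first exact: groupX.
have [xM | xM'] := boolP (x \in M); first exact: groupX.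
have /sum_freeP[_ _ sfD] := sfM M maxM.
have xD : x \in G :\: M by rewrite inE xM'.
by have := sfD x x xD xD; rewrite expg2 inE (groupM xG xG) andbT negbK.
Qed.

End SumFree.

Theorem theorem2 (gT : finGroupType) (G : {group gT}) :
  2.-abelem G <->
  ((forall S : {set gT},
      max_sum_free G S <-> exists M : {group gT}, maximal M G /\ S = G :\: M)
   /\ 'Phi(G) = 1).
Proof.
split=> [abG | [maxSF Phi1]].
  have pG := abelem_pgroup abG.
  by split=> [S | ]; [apply: max_sum_free_2group | apply/eqP; rewrite (trivg_Phi pG)].
apply/exponent2_abelem/exponentP => x xG; apply/set1gP; rewrite -Phi1.
apply: expg2_Phi => // M maxM.
by have /andP[] := (maxSF (G :\: M)).2 (ex_intro _ M (conj maxM erefl)).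
Qed.
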